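(* Let $u,v\in\{m_1,\dots,m_{k+1}\}^*$. Then there exists a state $s\in\mathcal S_k$ with $u\ast s=v\ast s\neq\varnothing$ if and only if $u\sim v$.
   Context: Fix $k\ge 0$. A system of $k$ stacks in series consists of an input queue, stacks $1,\dots,k$, and an output queue. A state records the contents of each stack and each queue (finitely many distinct labelled elements); there is one additional ''illegal'' state $\varnothing$; $\mathcal S_k$ denotes the set of all states including $\varnothing$. The moves are $m_1,\dots,m_{k+1}$: $m_i$ ($1\le i\le k$) pushes an element onto stack $i$, taking it from the front of the input queue if $i=1$ and popping it from the top of stack $i-1$ if $i>1$; $m_{k+1}$ pops the top of stack $k$ and enqueues it at the back of the output queue. For a word $w$ and state $s$, $w\ast s$ is obtained by applying the moves of $w$ left to right, with $w\ast s=\varnothing$ if some move is illegal and $w\ast\varnothing=\varnothing$. For words $x,y$ define $x\sim y$ iff $x\ast s=y\ast s$ for all $s\in\mathcal S_k$. *)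

From mathcomp Require Import all_boot.
Set Implicit Arguments. Unset Strict Implicit. Unset Printing Implicit Defensive.

(* A (legal) configuration of the system of k stacks in series.
   Elements are labelled by natural numbers.
   - inq  : input queue, front = head of the list
   - stks : the stacks 1..k (stks`_j is stack j+1), top = head of the list
   - outq : output queue, front = head, back = last element *)
Record config := Config { inq : seq nat; stks : seq (seq nat); outq : seq nat }.

Definition wf_config (k : nat) (c : config) : bool :=
  (size (stks c) == k) && uniq (inq c ++ flatten (stks c) ++ outq c).

(* States S_k: [None] is the illegal state, [Some c] a legal one. *)
Definition state := option config.
Definition is_state (k : nat) (s : state) : bool :=
  if s is Some c then wf_config k c else true.

(* Moves m_1, ..., m_{k+1} are represented by ordinals i : 'I_k.+1,
   with i standing for m_{i+1}. *)
Definition move (k : nat) := 'I_k.+1.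

(* Remove the element to be moved by m_{i+1}: front of the input queue if
   i = 0, else the top of stack i (0-based index i-1). *)
Definition take_src (i : nat) (c : config) : option (nat * config) :=
  if i == 0 then
    match inq c with
    | x :: r => Some (x, Config r (stks c) (outq c))
    | [::] => None
    end
  else
    match nth [::] (stks c) i.-1 with
    | x :: r => Some (x, Config (inq c) (set_nth [::] (stks c) i.-1 r) (outq c))
    | [::] => None
    end.

(* Put the element: onto stack i+1 (0-based index i) if i < k, else at the
   back of the output queue (i = k). *)
Definition put_dst (k i x : nat) (c : config) : config :=
  if i == k then Config (inq c) (stks c) (rcons (outq c) x)
  else Config (inq c) (set_nth [::] (stks c) i (x :: nth [::] (stks c) i)) (outq c).

Definition step (k : nat) (m : move k) (c : config) : state :=
  match take_src m c with
  | Some (x, c') => Some (put_dst k m x c')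
  | None => None
  end.

Definition act (k : nat) (w : seq (move k)) (s : state) : state :=
  foldl (fun s m => obind (step m) s) s w.

Definition equiv_words (k : nat) (x y : seq (move k)) : Prop :=
  forall s : state, is_state k s -> act x s = act y s.

From mathcomp Require Import all_boot zify.
Set Implicit Arguments. Unset Strict Implicit. Unset Printing Implicit Defensive.

(* (<=) On a state with at least |u| elements in the input queue and in every
   stack, every word of length |u| is defined; as u ~ v, v agrees with u there.

   (=>) Let u * c0 = v * c0 <> illegal, with c0 legal.
   1. Relabelling.  Moves commute with renaming the labels.  The labels of c0
      are distinct, so every configuration of the same shape as c0 is a
      relabelling of c0: u and v agree, and are defined, on it.
   2. Stacking.  [on_top c e] places c in front of e (input queue of c first,
      each stack of c above the same stack of e, output of c behind that of e);
      a computation on c lifts to [on_top c e].  For an arbitrary c, let e be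
      the shape of c0 filled with a fresh label.  Then [on_top c e] splits as
      [on_top t b] with t of the shape of c0, so by 1, u and v agree on it.
   3. Potential.  Mark the labels of e.  The sum of the stage indices of the
      marked elements never decreases, and increases whenever a marked element
      is moved.  If u * c = d then u * (on_top c e) = on_top d e has the
      potential of e, so the run of v on [on_top c e] never touches e: it is
      the lift of a run of v on c, and cancelling e gives v * c = d. *)

Lemma act_cons k (m : move k) w s : act (m :: w) s = act w (obind (step m) s).
Proof. by []. Qed.

Lemma act_illegal k (w : seq (move k)) : act w None = None.
Proof. by elim: w. Qed.

Lemma move_le k (m : move k) : m <= k.
Proof. by rewrite -ltnS. Qed.

Lemma take_src_size k i c x c1 : i <= k -> size (stks c) = k ->
  take_src i c = Some (x, c1) -> size (stks c1) = k.
Proof.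
rewrite /take_src; case: eqP => i0 hi hs.
  by case: (inq c) => //= y r [_ <-].
case: (nth [::] (stks c) i.-1) => //= y r [_ <-] /=.
rewrite size_set_nth hs; apply/maxn_idPr; lia.
Qed.

Lemma put_dst_size k i x c : i <= k -> size (stks c) = k ->
  size (stks (put_dst k i x c)) = k.
Proof.
rewrite /put_dst; case: eqP => ik hi hs //=.
rewrite size_set_nth hs; apply/maxn_idPr; lia.
Qed.

Lemma stepE k (m : move k) c d : step m c = Some d ->
  exists x c1, take_src m c = Some (x, c1) /\ d = put_dst k m x c1.
Proof.
rewrite /step; case: (take_src m c) => [[x c1]|] //= [<-]; by exists x, c1.
Qed.

Lemma step_size k (m : move k) c d : size (stks c) = k ->
  step m c = Some d -> size (stks d) = k.
Proof.
move=> hs /stepE [x [c1 [h ->]]].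
apply: put_dst_size (move_le m) _; exact: take_src_size (move_le m) hs h.
Qed.

Lemma act_size k (w : seq (move k)) c d : size (stks c) = k ->
  act w (Some c) = Some d -> size (stks d) = k.
Proof.
elim: w c => [|m w IH] c hs; first by case=> <-.
rewrite act_cons /=; case h: (step m c) => [c1|] /=; last by rewrite act_illegal.
apply: IH; exact: step_size h.
Qed.

Definition relabel (f : nat -> nat) (c : config) : config :=
  Config (map f (inq c)) (map (map f) (stks c)) (map f (outq c)).

Lemma nth_map_map (f : nat -> nat) (ss : seq (seq nat)) j :
  nth [::] (map (map f) ss) j = map f (nth [::] ss j).
Proof. by elim: ss j => [|s ss IH] [|j] //=. Qed.

Lemma set_nth_map_map (f : nat -> nat) (ss : seq (seq nat)) j t :
  map (map f) (set_nth [::] ss j t) = set_nth [::] (map (map f) ss) j (map f t).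
Proof. by elim: ss j => [|s ss IH] [|j] //=; rewrite ?IH //; elim: j => //= j ->. Qed.

Lemma take_src_relabel f i c :
  take_src i (relabel f c) = omap (fun p => (f p.1, relabel f p.2)) (take_src i c).
Proof.
rewrite /take_src /=; case: eqP => _; first by case: (inq c).
rewrite nth_map_map; case: (nth [::] (stks c) i.-1) => //= x r.
by rewrite /relabel /= set_nth_map_map.
Qed.

Lemma put_dst_relabel f k i x c :
  relabel f (put_dst k i x c) = put_dst k i (f x) (relabel f c).
Proof.
rewrite /put_dst; case: eqP => _; rewrite /relabel /=; first by rewrite map_rcons.
by rewrite set_nth_map_map /= nth_map_map.
Qed.

Lemma act_relabel f k (w : seq (move k)) c :
  act w (Some (relabel f c)) = omap (relabel f) (act w (Some c)).
Proof.
elim: w c => [|m w IH] c //.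
have step_relabel : step m (relabel f c) = omap (relabel f) (step m c).
  rewrite /step take_src_relabel; case: (take_src m c) => [[x c']|] //=.
  by rewrite put_dst_relabel.
rewrite !act_cons /= step_relabel; case: (step m c) => [d|] /=; first exact: IH.
by rewrite !act_illegal.
Qed.

Definition elems (c : config) : seq nat := inq c ++ flatten (stks c) ++ outq c.

Lemma elems_relabel f c : elems (relabel f c) = map f (elems c).
Proof. by rewrite /elems /relabel /= !map_cat map_flatten. Qed.

Definition same_shape (c d : config) : Prop :=
  [/\ size (inq c) = size (inq d), shape (stks c) = shape (stks d)
    & size (outq c) = size (outq d)].

Lemma same_shape_sym c d : same_shape c d -> same_shape d c.
Proof. by case=> *; split. Qed.

Lemma same_shape_trans c d e : same_shape c d -> same_shape d e -> same_shape c e.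
Proof. by case=> a b c1 [a' b' c']; split; congruence. Qed.

Lemma same_shape_relabel f c : same_shape (relabel f c) c.
Proof.
split; rewrite /relabel /= ?size_map //.
by rewrite /shape -map_comp; apply: eq_map => x /=; rewrite size_map.
Qed.

Lemma size_elems c :
  size (elems c) = size (inq c) + sumn (shape (stks c)) + size (outq c).
Proof. by rewrite /elems !size_cat size_flatten addnA. Qed.

Lemma same_shape_elems_eq c d : same_shape c d -> elems c = elems d -> c = d.
Proof.
case: c d => [a s o] [a' s' o'] [/= h1 h2 h3] /eqP.
rewrite /elems /= eqseq_cat // => /andP [/eqP -> ].
have h4 : size (flatten s) = size (flatten s') by rewrite !size_flatten h2.
rewrite eqseq_cat // => /andP [/eqP hf /eqP ->].
by rewrite (eq_from_flatten_shape hf h2).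
Qed.

Lemma map_index_uniq (s : seq nat) : uniq s -> map (index^~ s) s = iota 0 (size s).
Proof.
move=> us; rewrite -{2}(mkseq_nth 0 s) /mkseq -map_comp.
rewrite -{2}(map_id (iota 0 (size s))); apply/eq_in_map => i.
by rewrite mem_iota add0n => /andP [_ hi] /=; rewrite index_uniq.
Qed.

Lemma relabel_of_same_shape c0 c : uniq (elems c0) -> same_shape c c0 ->
  c = relabel (nth 0 (elems c)) (relabel (index^~ (elems c0)) c0).
Proof.
move=> u h; apply: same_shape_elems_eq.
  apply: same_shape_trans h _; apply: same_shape_sym.
  exact: same_shape_trans (same_shape_relabel _ _) (same_shape_relabel _ _).
rewrite !elems_relabel map_index_uniq //.
have -> : size (elems c0) = size (elems c).
  by case: h => a b d; rewrite !size_elems a b d.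
by rewrite -/(mkseq _ _) mkseq_nth.
Qed.

Lemma agree_on_shape k (u v : seq (move k)) c0 d0 : uniq (elems c0) ->
  act u (Some c0) = Some d0 -> act v (Some c0) = Some d0 ->
  forall c, same_shape c c0 -> act u (Some c) = act v (Some c) /\ act u (Some c) <> None.
Proof.
move=> uc hu hv c hc; rewrite (relabel_of_same_shape uc hc) !act_relabel hu hv.
by split.
Qed.

Definition stack_seqs (s t : seq (seq nat)) : seq (seq nat) :=
  [seq p.1 ++ p.2 | p <- zip s t].

Definition on_top (c e : config) : config :=
  Config (inq c ++ inq e) (stack_seqs (stks c) (stks e)) (outq e ++ outq c).

Lemma nth_stack_seqs s t j : size s = size t ->
  nth [::] (stack_seqs s t) j = nth [::] s j ++ nth [::] t j.
Proof. by elim: s t j => [|a s IH] [|b t] [|j] //= [] e; rewrite ?IH. Qed.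

Lemma size_stack_seqs s t : size s = size t -> size (stack_seqs s t) = size s.
Proof. by move=> e; rewrite size_map size_zip e minnn. Qed.

Lemma set_nth_stack_seqs s t j a : j < size s -> size s = size t ->
  set_nth [::] (stack_seqs s t) j (a ++ nth [::] t j)
  = stack_seqs (set_nth [::] s j a) t.
Proof. by elim: s t j => [|x s IH] [|b t] [|j] //= hj [] e; rewrite ?IH. Qed.

Section OnTop.
Variables (k : nat) (e : config).
Hypothesis size_e : size (stks e) = k.

Lemma take_src_on_top i c x c1 : i <= k -> size (stks c) = k ->
  take_src i c = Some (x, c1) -> take_src i (on_top c e) = Some (x, on_top c1 e).
Proof.
rewrite /take_src; case: eqP => i0 hi hs.
  by rewrite /on_top /=; case: (inq c) => //= y r [<- <-].
rewrite /= nth_stack_seqs ?hs ?size_e //.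
case: (nth [::] (stks c) i.-1) => //= y r [<- <-].
rewrite /on_top /= set_nth_stack_seqs // ?hs ?size_e //; lia.
Qed.

Lemma put_dst_on_top i x c : i <= k -> size (stks c) = k ->
  put_dst k i x (on_top c e) = on_top (put_dst k i x c) e.
Proof.
rewrite /put_dst; case: eqP => ik hi hs; rewrite /on_top /=; first by rewrite rcons_cat.
rewrite nth_stack_seqs ?hs ?size_e // -cat_cons set_nth_stack_seqs ?hs ?size_e //; lia.
Qed.

Lemma step_on_top (m : move k) c d : size (stks c) = k ->
  step m c = Some d -> step m (on_top c e) = Some (on_top d e).
Proof.
move=> hs /stepE [x [c1 [h ->]]].
rewrite /step (take_src_on_top (move_le m) hs h) /= put_dst_on_top //.
  exact: move_le.
exact: take_src_size (move_le m) hs h.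
Qed.

Lemma act_on_top (w : seq (move k)) c d : size (stks c) = k ->
  act w (Some c) = Some d -> act w (Some (on_top c e)) = Some (on_top d e).
Proof.
elim: w c => [|m w IH] c hs; first by case=> ->.
rewrite !act_cons /=; case h: (step m c) => [c1|] /=; last by rewrite act_illegal.
rewrite (step_on_top hs h); apply: IH; exact: step_size h.
Qed.

Lemma take_src_on_top_illegal i c x c2 : i <= k -> size (stks c) = k ->
  take_src i c = None -> take_src i (on_top c e) = Some (x, c2) -> x \in elems e.
Proof.
rewrite /take_src; case: eqP => i0 hi hs.
  rewrite /on_top /elems /=; case: (inq c) => //= _.
  by case: (inq e) => //= y r [<- _]; rewrite inE eqxx.
rewrite /= nth_stack_seqs ?hs ?size_e //.
case: (nth [::] (stks c) i.-1) => //= _.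
case ht: (nth [::] (stks e) i.-1) => [|y r] //= [<- _].
rewrite /elems !mem_cat; apply/or3P/Or32/flattenP; exists (y :: r); last exact: mem_head.
rewrite -ht; apply: mem_nth; rewrite size_e; lia.
Qed.

End OnTop.

Lemma catsI (s1 s2 t : seq nat) : s1 ++ t = s2 ++ t -> s1 = s2.
Proof.
move=> h; have hs : size s1 = size s2.
  by have := congr1 size h; rewrite !size_cat; lia.
by move/eqP: h; rewrite eqseq_cat // => /andP [/eqP].
Qed.

Lemma catIs (s1 s2 t : seq nat) : t ++ s1 = t ++ s2 -> s1 = s2.
Proof. by move/eqP; rewrite eqseq_cat // => /andP [_ /eqP]. Qed.

Lemma stack_seqs_inj s1 s2 t : size s1 = size t -> size s2 = size t ->
  stack_seqs s1 t = stack_seqs s2 t -> s1 = s2.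
Proof.
by elim: s1 s2 t => [|a s1 IH] [|b s2] [|x t] //= [h1] [h2] [/catsI -> /IH ->].
Qed.

Lemma on_top_inj c d e : size (stks c) = size (stks e) ->
  size (stks d) = size (stks e) -> on_top c e = on_top d e -> c = d.
Proof.
case: c => a b o; case: d => a' b' o' /= h1 h2.
by case=> /catsI -> /(stack_seqs_inj h1 h2) -> /catIs ->.
Qed.

Definition top_part (c0 B : config) : config :=
  Config (take (size (inq c0)) (inq B))
         [seq take p.1 p.2 | p <- zip (shape (stks c0)) (stks B)]
         (drop (size (outq B) - size (outq c0)) (outq B)).

Definition bottom_part (c0 B : config) : config :=
  Config (drop (size (inq c0)) (inq B))
         [seq drop p.1 p.2 | p <- zip (shape (stks c0)) (stks B)]
         (take (size (outq B) - size (outq c0)) (outq B)).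

Lemma on_top_split c0 B : size (stks c0) = size (stks B) ->
  on_top (top_part c0 B) (bottom_part c0 B) = B.
Proof.
case: B => a s o h; rewrite /on_top /top_part /bottom_part /= !cat_take_drop.
congr Config; move: h; rewrite -(size_map size) -/(shape _) /stack_seqs.
by elim: (shape _) s => [|n sh IH] [|t s] //= [/IH ->]; rewrite cat_take_drop.
Qed.

Lemma size_bottom_part k c0 B : size (stks c0) = k -> size (stks B) = k ->
  size (stks (bottom_part c0 B)) = k.
Proof. by move=> h1 h2; rewrite /bottom_part /= size_map size_zip size_map h1 h2 minnn. Qed.

Lemma top_part_shape k c e c0 : size (stks c) = k -> size (stks e) = k ->
  same_shape e c0 -> same_shape (top_part c0 (on_top c e)) c0.
Proof.
move=> hc he [h1 h2 h3]; split; rewrite /top_part /on_top /=.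
- by rewrite size_takel // size_cat -h1 leq_addl.
- rewrite -h2; have : size (stks c) = size (stks e) by rewrite hc he.
  elim: (stks c) (stks e) => [|a s IH] [|b t] //= [/IH ->].
  by rewrite size_takel // size_cat leq_addl.
- rewrite size_drop size_cat -h3; lia.
Qed.

Lemma agree_on_top k (u v : seq (move k)) c0 d0 c e :
  size (stks c0) = k -> uniq (elems c0) ->
  act u (Some c0) = Some d0 -> act v (Some c0) = Some d0 ->
  size (stks c) = k -> size (stks e) = k -> same_shape e c0 ->
  act u (Some (on_top c e)) = act v (Some (on_top c e)).
Proof.
move=> hk0 uc hu hv hk he e_shape; set B := on_top c e.
have hsz : size (stks c0) = size (stks B) by rewrite /= size_stack_seqs hk ?he.
rewrite -(on_top_split hsz).
have top_shape := top_part_shape hk he e_shape.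
have [huv hn] := agree_on_shape uc hu hv top_shape.
have size_top : size (stks (top_part c0 B)) = k.
  by case: top_shape => _ h _; rewrite -(size_map size) -/(shape _) h /shape size_map.
have size_bottom : size (stks (bottom_part c0 B)) = k.
  by apply: size_bottom_part => //; rewrite -hsz.
case hx: (act u (Some (top_part c0 B))) hn => [dx|] // _; rewrite hx in huv.
by rewrite (act_on_top size_bottom size_top hx) (act_on_top size_bottom size_top (esym huv)).
Qed.

Definition mass (g : nat -> nat) (s : seq nat) : nat := sumn (map g s).

Fixpoint stacks_potential (w g : nat -> nat) (j : nat) (ss : seq (seq nat)) : nat :=
  if ss is s :: ss' then w j * mass g s + stacks_potential w g j.+1 ss' else 0.

Definition potential k (w g : nat -> nat) (c : config) : nat :=
  w 0 * mass g (inq c) + stacks_potential w g 1 (stks c) + w k.+1 * mass g (outq c).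

Lemma mass_cat g s t : mass g (s ++ t) = mass g s + mass g t.
Proof. by rewrite /mass map_cat sumn_cat. Qed.

Lemma stacks_potential_set_nth w g i ss j t : j < size ss ->
  stacks_potential w g i (set_nth [::] ss j t) + w (i + j) * mass g (nth [::] ss j)
  = stacks_potential w g i ss + w (i + j) * mass g t.
Proof.
elim: ss i j => [|s ss IH] i [|j] //= hj; first by rewrite addn0; lia.
have := IH i.+1 j hj; rewrite addSnnS; lia.
Qed.

Lemma potential_on_top k w g c e : size (stks c) = size (stks e) ->
  potential k w g (on_top c e) = potential k w g c + potential k w g e.
Proof.
move=> hs; have stacks : forall i, stacks_potential w g i (stack_seqs (stks c) (stks e))
    = stacks_potential w g i (stks c) + stacks_potential w g i (stks e).
  elim: (stks c) (stks e) hs => [|a s IH] [|b t] //= [/IH h] i.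
  by rewrite h mass_cat mulnDr; lia.
by rewrite /potential /on_top /= stacks !mass_cat !mulnDr; lia.
Qed.

Lemma take_src_potential k w g i c x c1 : i <= k -> size (stks c) = k ->
  take_src i c = Some (x, c1) -> potential k w g c1 + w i * g x = potential k w g c.
Proof.
rewrite /take_src /potential; case: eqP => i0 hi hs.
  by case: (inq c) => //= y r [<- <-] /=; rewrite i0 /mass /= mulnDr; lia.
case h: (nth [::] (stks c) i.-1) => [|y r] //= [<- <-] /=.
have hj : i.-1 < size (stks c) by rewrite hs; lia.
have := stacks_potential_set_nth w g 1 r hj; rewrite h /mass /=.
have -> : 1 + i.-1 = i by lia.
rewrite mulnDr; lia.
Qed.

Lemma put_dst_potential k w g i x c : i <= k -> size (stks c) = k ->
  potential k w g (put_dst k i x c) = potential k w g c + w i.+1 * g x.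
Proof.
rewrite /put_dst /potential; case: eqP => ik hi hs /=.
  by rewrite /mass map_rcons sumn_rcons mulnDr ik; lia.
have hj : i < size (stks c) by rewrite hs; lia.
have := stacks_potential_set_nth w g 1 (x :: nth [::] (stks c) i) hj.
rewrite /mass /= add1n mulnDr; lia.
Qed.

Lemma step_potential k (m : move k) c x c1 w g : size (stks c) = k ->
  take_src m c = Some (x, c1) ->
  potential k w g (put_dst k m x c1) + w m * g x = potential k w g c + w m.+1 * g x.
Proof.
move=> hs h; rewrite put_dst_potential ?move_le //; last exact: take_src_size (move_le m) hs h.
rewrite -(take_src_potential w g (move_le m) hs h); lia.
Qed.

(* With weights i |-> i the potential never decreases; with unit weights it is
   the total mass, which is invariant. *)
Lemma act_potential k (w : seq (move k)) c d g : size (stks c) = k ->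
  act w (Some c) = Some d ->
  potential k id g c <= potential k id g d /\
  potential k (fun _ => 1) g d = potential k (fun _ => 1) g c.
Proof.
elim: w c => [|m w IH] c hs; first by case=> ->.
rewrite act_cons /=; case h: (step m c) => [c1|] /=; last by rewrite act_illegal.
move=> /IH [|le_c1_d eq_d_c1]; first exact: step_size h.
have [x [c2 [ht hc1]]] := stepE h.
have := step_potential id g hs ht; have := step_potential (fun _ => 1) g hs ht.
rewrite -hc1 /= eq_d_c1; split; [apply: leq_trans le_c1_d|]; lia.
Qed.

Lemma potential_mass0 k w g c : potential k (fun _ => 1) g c = 0 -> potential k w g c = 0.
Proof.
have stacks0 i ss : stacks_potential (fun _ => 1) g i ss = 0 ->
    stacks_potential w g i ss = 0.
  elim: ss i => [|s ss IH] i //= /eqP; rewrite addn_eq0 mul1n.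
  by case/andP=> /eqP -> /eqP /IH ->; rewrite muln0.
rewrite /potential !mul1n => /eqP; rewrite !addn_eq0.
by case/andP=> /andP [/eqP -> /eqP /stacks0 ->] /eqP ->; rewrite !muln0.
Qed.

Lemma potential_unmarked k g c : all (fun x => g x == 0) (elems c) ->
  potential k (fun _ => 1) g c = 0.
Proof.
have mass0 s : all (fun x => g x == 0) s -> mass g s = 0.
  elim: s => [|x s IH] //= /andP [/eqP gx /IH ms0].
  by rewrite /mass /= gx -/(mass g s) ms0.
have stacks0 i ss : all (fun x => g x == 0) (flatten ss) ->
    stacks_potential (fun _ => 1) g i ss = 0.
  elim: ss i => [|s ss IH] i //=; rewrite all_cat => /andP [/mass0 -> /IH ->].
  by rewrite muln0.
rewrite /elems !all_cat => /and3P [/mass0 a /stacks0 b /mass0 d].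
by rewrite /potential a b d !muln0.
Qed.

Section Cancel.
Variables (k : nat) (g : nat -> nat) (e : config).
Hypothesis size_e : size (stks e) = k.
Hypothesis e_marked : forall x, x \in elems e -> g x = 1.

(* Let c carry no mass.  A run on [on_top c e] that does not raise the potential
   above that of e never moves a label of e, so it is defined already on c. *)
Lemma defined_of_on_top (w : seq (move k)) c D : size (stks c) = k ->
  potential k (fun _ => 1) g c = 0 -> act w (Some (on_top c e)) = Some D ->
  potential k id g D <= potential k id g e -> act w (Some c) <> None.
Proof.
elim: w c => [|m w IH] c hs c_mass0 //.
rewrite !act_cons /=; case h: (step m c) => [c1|] /=.
  rewrite (step_on_top size_e hs h) /=; apply: IH; first exact: step_size h.
  have one_step : act [:: m] (Some c) = Some c1 by rewrite act_cons /= h.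
  by have [_ ->] := act_potential g hs one_step.
case h2: (step m (on_top c e)) => [c2|] /=; last by rewrite act_illegal.
have hse : size (stks (on_top c e)) = k by rewrite /= size_stack_seqs ?hs ?size_e.
move=> hD hle _.
have [x [c1' [ht hc2]]] := stepE h2.
have hn : take_src m c = None.
  by move: h; rewrite /step; case: (take_src m c) => [[]|].
have gx : g x = 1 := e_marked (take_src_on_top_illegal size_e (move_le m) hs hn ht).
have := step_potential id g hse ht; rewrite -hc2 gx !muln1 /=.
have [mono _] := act_potential g (step_size hse h2) hD.
rewrite potential_on_top ?hs ?size_e // (potential_mass0 id c_mass0); lia.
Qed.

Lemma cancel_bottom (u v : seq (move k)) c d : size (stks c) = k ->
  potential k (fun _ => 1) g c = 0 ->
  act u (Some (on_top c e)) = act v (Some (on_top c e)) ->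
  act u (Some c) = Some d -> act v (Some c) = Some d.
Proof.
move=> hs c_mass0 huv hu.
have hd := act_size hs hu.
have hvD : act v (Some (on_top c e)) = Some (on_top d e).
  by rewrite -huv; exact: act_on_top.
have [_ d_mass] := act_potential g hs hu; rewrite c_mass0 in d_mass.
case hv: (act v (Some c)) => [d'|]; last first.
  exfalso; apply: (defined_of_on_top hs c_mass0 hvD) => //.
  by rewrite potential_on_top ?hd ?size_e // (potential_mass0 id d_mass).
have hd' := act_size hs hv.
have := act_on_top size_e hs hv; rewrite hvD => /Some_inj /on_top_inj -> //;
  by rewrite size_e.
Qed.
End Cancel.

Definition big_enough (n : nat) (c : config) : bool :=
  (n <= size (inq c)) && all (fun s => n <= size s) (stks c).

Lemma all_set_nth (P : pred (seq nat)) s j y : j < size s -> all P s -> P y ->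
  all P (set_nth [::] s j y).
Proof.
elim: s j => [|a s IH] [|j] //= hj /andP [pa ps] py; first by rewrite py.
by rewrite pa IH.
Qed.

Lemma take_src_big k i c n : i <= k -> size (stks c) = k -> big_enough n.+1 c ->
  exists x c1, take_src i c = Some (x, c1) /\ big_enough n c1.
Proof.
rewrite /take_src /big_enough; case: eqP => i0 hi hs /andP [h1 h2].
  case: (inq c) h1 => //= x r h1; exists x, (Config r (stks c) (outq c)); split => //=.
  by apply/andP; split => //; apply: sub_all h2 => s; exact: ltnW.
have hj : i.-1 < size (stks c) by rewrite hs; lia.
have := allP h2 _ (mem_nth [::] hj).
case: (nth [::] (stks c) i.-1) => //= x r hr.
exists x, (Config (inq c) (set_nth [::] (stks c) i.-1 r) (outq c)); split => //=.
rewrite ltnW //; apply: all_set_nth => //; apply: sub_all h2 => s; exact: ltnW.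
Qed.

Lemma put_dst_big k i x c n : i <= k -> size (stks c) = k -> big_enough n c ->
  big_enough n (put_dst k i x c).
Proof.
rewrite /put_dst /big_enough; case: eqP => ik hi hs /andP [h1 h2] /=; rewrite h1 //=.
have hj : i < size (stks c) by rewrite hs; lia.
by apply: all_set_nth => //=; apply/leqW/(allP h2)/mem_nth.
Qed.

(* Each move consumes at most one element of a stage, so a word w is defined
   on any configuration that is [big_enough (size w)]. *)
Lemma act_defined_on_big k (w : seq (move k)) c : size (stks c) = k ->
  big_enough (size w) c -> act w (Some c) <> None.
Proof.
elim: w c => [|m w IH] c hs hb //.
have [x [c1 [ht hb1]]] := take_src_big (move_le m) hs hb.
have hs1 := take_src_size (move_le m) hs ht.
rewrite act_cons /= /step ht /=; apply: IH.
  exact: put_dst_size (move_le m) hs1.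
exact: put_dst_big (move_le m) hs1 hb1.
Qed.

Definition fill (M : nat) (c0 : config) : config :=
  Config (nseq (size (inq c0)) M) [seq nseq (size s) M | s <- stks c0]
         (nseq (size (outq c0)) M).

Lemma fill_shape M c0 : same_shape (fill M c0) c0.
Proof.
split; rewrite /= ?size_nseq //.
by rewrite /shape -map_comp; apply: eq_map => s /=; rewrite size_nseq.
Qed.

Lemma elems_fill M c0 x : x \in elems (fill M c0) -> x = M.
Proof.
rewrite /elems /= !mem_cat => /or3P [| /flattenP [s /mapP [s' _ ->]] |];
  by rewrite mem_nseq => /andP [_ /eqP].
Qed.

(* Used to pick a label larger than all labels of a configuration. *)
Lemma mem_leq_sumn x (s : seq nat) : x \in s -> x <= sumn s.
Proof.
elim: s => //= y s IH; rewrite inE => /orP [/eqP ->|/IH h]; first exact: leq_addr.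
exact: leq_trans h (leq_addl _ _).
Qed.

(* Agreement on one legal state where u is defined implies u ~ v: stack an
   arbitrary c on a filling of the shape of c0 by a fresh marked label M. *)
Lemma agree_everywhere k (u v : seq (move k)) c0 d0 : wf_config k c0 ->
  act u (Some c0) = Some d0 -> act v (Some c0) = Some d0 -> equiv_words u v.
Proof.
case/andP => /eqP hk0 uc0 hu hv [c|] /=; last by rewrite !act_illegal.
case/andP => /eqP hk _.
pose M := (sumn (elems c)).+1; pose g x := nat_of_bool (M <= x).
have e_marked x : x \in elems (fill M c0) -> g x = 1.
  by move/elems_fill ->; rewrite /g leqnn.
have he : size (stks (fill M c0)) = k by rewrite /= size_map.
have c_mass0 : potential k (fun _ => 1) g c = 0.
  apply: potential_unmarked; apply/allP => x /mem_leq_sumn hx.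
  by rewrite /g leqNgt ltnS hx.
have huv := agree_on_top hk0 uc0 hu hv hk he (fill_shape M c0).
case hu': (act u (Some c)) => [d|].
  by rewrite (cancel_bottom he e_marked hk c_mass0 huv hu').
case hv': (act v (Some c)) => [d|] //.
by rewrite (cancel_bottom he e_marked hk c_mass0 (esym huv) hv') in hu'.
Qed.

(* If u ~ v, they agree on the legal state with |u| distinct labels in the
   input queue and in each stack, on which u is defined. *)
Lemma agree_somewhere k (u v : seq (move k)) : equiv_words u v ->
  exists s : state, [/\ is_state k s, act u s = act v s & act u s <> None].
Proof.
move=> u_equiv_v; pose n := size u; pose L := iota 0 (n + n * k).
pose c := Config (take n L) (reshape (nseq k n) (drop n L)) [::].
have hsd : size (drop n L) = n * k by rewrite size_drop size_iota; lia.
have hk : size (stks c) = k by rewrite /= size_reshape size_nseq.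
have elems_c : elems c = L.
  rewrite /elems /= reshapeKr ?sumn_nseq ?hsd ?cats0 ?cat_take_drop //; lia.
have legal_c : is_state k (Some c).
  by rewrite /= /wf_config hk eqxx -/(elems c) elems_c iota_uniq.
exists (Some c); split => //; first exact: u_equiv_v.
apply: act_defined_on_big => //; apply/andP; split.
  by rewrite /= size_takel // size_iota leq_addr.
rewrite /= -(all_map size (leq n)) -/(shape _) reshapeKl ?sumn_nseq ?hsd; last lia.
by apply/allP => z; rewrite mem_nseq => /andP [_ /eqP ->].
Qed.

Theorem proposition4 (k : nat) (u v : seq (move k)) :
  (exists s : state, [/\ is_state k s, act u s = act v s & act u s <> None])
  <-> equiv_words u v.
Proof.
split; last exact: agree_somewhere.
case=> [[c0|]] [legal_c0 huv hu]; last by rewrite act_illegal in hu.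
case hd0: (act u (Some c0)) hu => [d0|] // _.
by apply: (agree_everywhere legal_c0 hd0); rewrite -huv.
Qed.
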